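(* If the function $\dot f^{-1}$ is strictly positive (that is, $\dot f^{-1}:\mathbb{R}\to(0,\infty)$), then $\mathcal{A}_{Q,z}=(0,\infty)$.
   Context: Setting. - $\mathcal{M}\subseteq\mathbb{R}^d$; $h:\mathcal{M}\times\mathcal{X}\to\mathcal{Y}$; the loss $\ell:\mathcal{Y}\times\mathcal{Y}\to[0,\infty)$ satisfies $\ell(y,y)=0$. - For a dataset $z=((x_1,y_1),\dots,(x_n,y_n))$, $L_z(\theta)=\frac1n\sum_i\ell(h(\theta,x_i),y_i)$. - $Q$ is a Borel probability measure on $\mathcal{M}$. - $f:[0,\infty)\to\mathbb{R}$ is convex with $f(1)=0$, and is strictly convex and differentiable. - $\dot f$ is its derivative on $(0,\infty)$ and $\dot f^{-1}$ the inverse of $\dot f$. Admissible regularization factors. $\mathcal{A}_{Q,z}\subseteq(0,\infty)$ is the set of $\lambda>0$ for which there exists $\beta\in\mathbb{R}$ with $\dot f^{-1}\big(-\frac{\beta+L_z(\theta)}{\lambda}\big)>0$ for all $\theta\in\operatorname{supp}Q$ and $\int\dot f^{-1}\big(-\frac{\beta+L_z(\theta)}{\lambda}\big)dQ(\theta)=1$. *)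

From HB Require Import structures.
From mathcomp Require Import all_boot all_order all_algebra.
From mathcomp Require Import all_classical all_reals all_analysis.
Set Implicit Arguments. Unset Strict Implicit. Unset Printing Implicit Defensive.
Import Order.TTheory GRing.Theory Num.Theory.
Import numFieldNormedType.Exports.
Local Open Scope classical_set_scope.
Local Open Scope ring_scope.

Notation borelRd R d := (g_sigma_algebraType (@open ('rV[R]_d))).

Definition msupp (R : realType) (d : nat)
  (mu : set (borelRd R d) -> \bar R) : set 'rV[R]_d :=
  [set th | forall U : set 'rV[R]_d, open U -> U th -> (0 < mu U)%E].

Definition Lz (R : realType) (d : nat) (X Y : Type)
  (h : 'rV[R]_d -> X -> Y) (loss : Y -> Y -> R) (n : nat)
  (z : 'I_n -> X * Y) (th : 'rV[R]_d) : R :=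
  n%:R^-1 * \sum_(i < n) loss (h th (z i).1) (z i).2.

Definition convex_on_nonneg (R : realType) (f : R -> R) : Prop :=
  forall x y t : R, 0 <= x -> 0 <= y -> 0 <= t -> t <= 1 ->
    f (t * x + (1 - t) * y) <= t * f x + (1 - t) * f y.

Definition strictly_convex_on_nonneg (R : realType) (f : R -> R) : Prop :=
  forall x y t : R, 0 <= x -> 0 <= y -> x != y -> 0 < t -> t < 1 ->
    f (t * x + (1 - t) * y) < t * f x + (1 - t) * f y.

(* The set A_{Q,z} of admissible regularization factors, where finv plays
   the role of (f')^{-1}. *)
Definition admissible (R : realType) (d : nat) (X Y : Type)
  (M : set 'rV[R]_d) (h : 'rV[R]_d -> X -> Y) (loss : Y -> Y -> R)
  (n : nat) (z : 'I_n -> X * Y) (Q : probability (borelRd R d) R)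
  (finv : R -> R) : set R :=
  [set lam | 0 < lam /\
    exists beta : R,
      (forall th, M th -> msupp Q th ->
         0 < finv (- (beta + Lz h loss z th) / lam)) /\
      (\int[Q]_(th in M) (finv (- (beta + Lz h loss z th) / lam))%:E = 1)%E].

From mathcomp Require Import all_boot all_order all_algebra.
From mathcomp Require Import all_classical all_reals all_analysis.
From mathcomp Require Import ring lra measurable_realfun.

(* Convexity makes f' nondecreasing on (0, +oo); hence finv, its inverse, is
   increasing and, since its range is all of (0, +oo), continuous.  For lam > 0
   the normalising integral G(beta) = \int_M finv (-(beta + L_z) / lam) dQ is
   then nonincreasing and continuous in beta (dominated convergence: L_z >= 0
   bounds the integrand by finv (-beta / lam)).  It is at most 1/2 at
   beta = -lam f'(1/2), and at least 1 for beta very negative, because Q puts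
   most of its mass on a sublevel set {L_z <= N} where the integrand is >= 2.
   The intermediate value theorem yields beta with G(beta) = 1, and the
   positivity condition holds because finv > 0 everywhere. *)

Set Implicit Arguments.
Unset Strict Implicit.
Unset Printing Implicit Defensive.

Import Order.TTheory GRing.Theory Num.Theory.
Import numFieldNormedType.Exports.
Local Open Scope classical_set_scope.
Local Open Scope ring_scope.

Lemma derive1_cvg (R : realType) (g : R -> R) (x : R) : derivable g x 1 ->
  h^-1 * (g (h + x) - g x) @[h --> 0^'] --> derive1 g x.
Proof.
move=> dg; rewrite derive1E.
suff -> : (fun h => h^-1 * (g (h + x) - g x)) =
          (fun h => h^-1 *: ((g \o shift x) (h *: 1) - g x)) by exact: dg.
by apply/funext => h; rewrite /= /shift [h *: 1]mulr1.
Qed.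

Section convex_derivative.
Variables (R : realType) (f : R -> R).
Hypothesis cvxf : convex_on_nonneg f.

Lemma convex_three_slope (a b c : R) : 0 <= a -> a < b -> b < c ->
  f b * (c - a) <= f a * (c - b) + f c * (b - a).
Proof.
move=> a0 ab bc; have ca : 0 < c - a by lra.
pose t := (c - b) / (c - a).
have t0 : 0 <= t by rewrite divr_ge0 //; lra.
have t1 : t <= 1 by rewrite ler_pdivrMr //; lra.
have c0 : 0 <= c by lra.
have := cvxf a0 c0 t0 t1.
have -> : t * a + (1 - t) * c = b by rewrite /t; field; rewrite gt_eqF.
have -> : t * f a + (1 - t) * f c = (f a * (c - b) + f c * (b - a)) / (c - a).
  by rewrite /t; field; rewrite gt_eqF.
by rewrite ler_pdivlMr.
Qed.

Lemma convex_derive1_le_slope (x y : R) : 0 < x -> x < y -> derivable f x 1 ->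
  derive1 f x <= (f y - f x) / (y - x).
Proof.
move=> x0 xy dfx; have yx : 0 < y - x by lra.
have dfx_right := cvg_dnbhs_at_right (derive1_cvg dfx).
rewrite -(cvg_lim _ dfx_right) //; apply: limr_le; first exact: cvgP dfx_right.
near=> h.
have h0 : 0 < h by near: h; exact: nbhs_right_gt.
have hy : h < y - x by near: h; exact: nbhs_right_lt.
rewrite [h^-1 * _]mulrC ler_pdivrMr // mulrAC ler_pdivlMr //.
have xhx : x < h + x by lra.
have hxy : h + x < y by lra.
have := convex_three_slope (ltW x0) xhx hxy; nra.
Unshelve. all: end_near. Qed.

Lemma convex_slope_le_derive1 (x y : R) : 0 < x -> x < y -> derivable f y 1 ->
  (f y - f x) / (y - x) <= derive1 f y.
Proof.
move=> x0 xy dfy; have yx : 0 < y - x by lra.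
have dfy_left := cvg_dnbhs_at_left (derive1_cvg dfy).
rewrite -(cvg_lim _ dfy_left) //; apply: limr_ge; first exact: cvgP dfy_left.
near=> h.
have h0 : h < 0 by near: h; exact: nbhs_left_lt.
have hy : x - y < h by near: h; apply: nbhs_left_gt; lra.
rewrite [h^-1 * _]mulrC ler_ndivlMr // mulrAC ler_pdivlMr //.
have xhy : x < h + y by lra.
have hyy : h + y < y by lra.
have := convex_three_slope (ltW x0) xhy hyy; nra.
Unshelve. all: end_near. Qed.

Lemma convex_derive1_le (x y : R) : 0 < x -> x <= y ->
  derivable f x 1 -> derivable f y 1 -> derive1 f x <= derive1 f y.
Proof.
move=> x0; rewrite le_eqVlt => /predU1P[<- //|xy] dfx dfy.
exact: le_trans (convex_derive1_le_slope x0 xy dfx) (convex_slope_le_derive1 x0 xy dfy).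
Qed.
End convex_derivative.

Section inverse_derivative.
Variables (R : realType) (f finv : R -> R).
Hypothesis cvxf : convex_on_nonneg f.
Hypothesis df : forall x, 0 < x -> derivable f x 1.
Hypothesis derive1K : forall x, 0 < x -> finv (derive1 f x) = x.
Hypothesis finvK : forall t, derive1 f (finv t) = t.
Hypothesis finv_gt0 : forall t, 0 < finv t.

Lemma finv_lt : {homo finv : s t / s < t}.
Proof.
move=> s t st; rewrite ltNge; apply/negP => ts.
have := convex_derive1_le cvxf (finv_gt0 t) ts (df (finv_gt0 t)) (df (finv_gt0 s)).
by rewrite !finvK leNgt st.
Qed.

Lemma finv_le : {mono finv : s t / s <= t}.
Proof. exact: le_mono finv_lt. Qed.

Lemma finv_continuous : continuous finv.
Proof.
move=> t; apply: (@within_continuous_continuous _ _ _ (t - 1) (t + 1));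
  rewrite ?in_itv /=; try lra.
apply: segment_inc_surj_continuous => [s u _ _|y /= yab]; first exact: finv_le.
have y0 : 0 < y by apply: lt_le_trans (finv_gt0 (t - 1)) _; rewrite (itvP yab).
exists (derive1 f y); last exact: derive1K.
have dfinv s : derivable f (finv s) 1 by exact/df/finv_gt0.
have dfy := df y0.
rewrite in_itv /= -{1}(finvK (t - 1)) -{1}(finvK (t + 1)).
by apply/andP; split; apply: (convex_derive1_le cvxf) => //;
  rewrite ?finv_gt0 ?(itvP yab).
Qed.
End inverse_derivative.

Lemma measure_sublevel_ge d (T : measurableType d) (R : realType)
    (mu : {measure set T -> \bar R}) (D : set T) (L : T -> R) (r : R) :
  measurable D -> measurable_fun D L -> (r%:E < mu D)%E ->
  exists N : nat, (r%:E <= mu (D `&` L @^-1` `]-oo, N%:R]))%E.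
Proof.
move=> mD mL rD; pose A (k : nat) := D `&` L @^-1` `]-oo, k%:R].
have mA k : measurable (A k) by exact: mL mD _ (measurable_itv _).
have ndA : nondecreasing_seq A.
  move=> k m km; rewrite subsetEset => x [Dx]; rewrite /= !in_itv /= => Lk.
  by split => //=; rewrite in_itv /= (le_trans Lk) // ler_nat.
have UA : \bigcup_k A k = D.
  apply/seteqP; split => [x [k _ []] //|x Dx].
  exists (Num.Def.archi_bound `|L x|) => //; split => //=.
  by rewrite in_itv /=; apply/ltW/(le_lt_trans (ler_norm _)); rewrite archi_boundP.
have mUA : measurable (\bigcup_k A k) by rewrite UA.
have cA := @nondecreasing_cvg_mu _ _ _ mu _ mA mUA ndA; rewrite UA in cA.
have ndmuA : nondecreasing_seq (mu \o A).
  by move=> k m /ndA; rewrite subsetEset => AkAm; apply: le_measure; rewrite ?inE.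
have rlim : (r%:E < limn (mu \o A))%E by rewrite (cvg_lim _ cA).
have [N _ /(_ N (leqnn N)) ?] := lte_lim ndmuA (cvgP _ cA) rlim.
by exists N.
Qed.

Lemma continuous_ivt (R : realType) (G : R -> R) (a b v : R) :
  continuous G -> G a <= v -> v <= G b -> exists c, G c = v.
Proof.
move=> cG av vb.
have cGab (x y : R) : {within `[x, y], continuous G}.
  exact: continuous_subspaceT.
have [ab|ba] := leP a b.
  have vm : Num.min (G a) (G b) <= v <= Num.max (G a) (G b).
    by rewrite ge_min le_max av vb ?orbT.
  by have [c _ Gc] := IVT ab (cGab a b) vm; exists c.
have vm : Num.min (G b) (G a) <= v <= Num.max (G b) (G a).
  by rewrite ge_min le_max av vb ?orbT.
by have [c _ Gc] := IVT (ltW ba) (cGab b a) vm; exists c.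
Qed.

Section shifted_integral.
Context d (T : measurableType d) (R : realType) (P : probability T R).
Variables (D : set T) (L : T -> R) (g : R -> R).
Hypothesis mD : measurable D.
Hypothesis PD : P D = 1%E.
Hypothesis mL : measurable_fun D L.
Hypothesis L_ge0 : forall x, D x -> 0 <= L x.
Hypothesis g_cont : continuous g.
Hypothesis g_nd : {homo g : s t / s <= t}.
Hypothesis g_ge0 : forall t, 0 <= g t.

Let F b x := g (- (b + L x)).

Let F_le b x : D x -> F b x <= g (- b).
Proof. by move=> Dx; apply: g_nd; have := L_ge0 Dx; lra. Qed.

Let measurable_F b : measurable_fun D (F b).
Proof.
apply: measurableT_comp; first exact: continuous_measurable_fun.
exact/measurable_funN/measurable_funD.
Qed.

Let integrable_F b : P.-integrable D (EFin \o F b).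
Proof.
apply: (le_integrable mD _ _ (finite_measure_integrable_cst P (g (- b)) mD)).
  exact/measurable_EFinP.
by move=> x Dx; rewrite /= lee_fin !ger0_norm ?g_ge0 ?F_le.
Qed.

Let G b := \int[P]_(x in D) F b x.

Let integral_FE b : (\int[P]_(x in D) (F b x)%:E)%E = (G b)%:E.
Proof. by rewrite /G /Rintegral fineK // (integrable_fin_num mD (integrable_F b)). Qed.

Let G_le b : G b <= g (- b).
Proof.
apply: le_trans (le_Rintegral mD (integrable_F b)
  (finite_measure_integrable_cst P (g (- b)) mD) (F_le b)) _.
rewrite Rintegral_cst // [fine _](_ : _ = 1) ?mulr1 //.
by rewrite -[LHS]/(fine (P D)) PD.
Qed.

Let G_ge_sublevel t N :
  g t * fine (P (D `&` L @^-1` `]-oo, N])) <= G (- (t + N)).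
Proof.
set A := D `&` _; have mA : measurable A by exact: mL mD _ (measurable_itv _).
rewrite -lee_fin -integral_FE EFinM fineK ?fin_num_measure // -integral_cst //.
apply: le_trans (ge0_subset_integral P mA mD _ _ _).
- apply: ge0_le_integral => //.
  + by move=> x _; apply: g_ge0.
  + by apply: (measurable_funS mD (@subIsetl _ _ _)); exact/measurable_EFinP.
  + move=> x [_]; rewrite /= in_itv /= => LN.
    by rewrite lee_fin; apply: g_nd; lra.
- exact/measurable_EFinP.
- by move=> x _; apply: g_ge0.
- exact: subIsetl.
Qed.

Let G_continuous : continuous G.
Proof.
move=> b; apply/(@cvg_nbhsP _ R^o) => u ub.
have [M _ uM] := pinfty_ex_gt0 (cvg_seq_bounded (cvgP _ ub)).
suff : (\int[P]_(x in D) (F (u n) x)%:E)%E @[n --> \oo] -->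
       (\int[P]_(x in D) (F b x)%:E)%E by rewrite integral_FE => /fine_cvg.
apply: (dominated_cvg mD (g := EFin \o cst (g M))) => //.
- by move=> n; exact/measurable_EFinP.
- move=> x Dx; apply: cvg_EFin; first exact: nearW.
  apply: continuous_cvg; first exact: g_cont.
  by apply: cvgN; apply: cvgD => //; exact: cvg_cst.
- exact: (finite_measure_integrable_cst P _ mD).
- move=> n x Dx; rewrite gee0_abs ?lee_fin ?g_ge0 //.
  apply: le_trans (F_le (u n) Dx) _; apply: g_nd.
  by have /= := uM n I; rewrite ler_norml => /andP[]; lra.
Qed.

Lemma exists_shift_integral_eq (c t0 t1 : R) : g t0 <= c -> c < g t1 ->
  exists b, (\int[P]_(x in D) (g (- (b + L x)))%:E)%E = c%:E.
Proof.
move=> t0c ct1; have g1 : 0 < g t1 by apply: le_lt_trans (g_ge0 t0) _; lra.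
have cPD : ((c / g t1)%:E < P D)%E by rewrite PD lte_fin ltr_pdivrMr ?mul1r.
(* On the sublevel set {L <= N} of mass >= c / g t1, the integrand at
   b = -(t1 + N) is at least g t1. *)
have [N PA] := measure_sublevel_ge mD mL cPD.
have G1 : c <= G (- (t1 + N%:R)).
  apply: le_trans (G_ge_sublevel t1 N%:R).
  rewrite mulrC -ler_pdivrMr // -lee_fin fineK ?fin_num_measure //.
  exact: mL mD _ (measurable_itv _).
have G0 : G (- t0) <= c by apply: le_trans (G_le _) _; rewrite opprK.
have [b Gb] := continuous_ivt G_continuous G0 G1.
by exists b; rewrite integral_FE Gb.
Qed.

End shifted_integral.

Theorem lemma3 (R : realType) (d : nat) (X Y : Type)
  (M : set 'rV[R]_d) (h : 'rV[R]_d -> X -> Y) (loss : Y -> Y -> R)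
  (n : nat) (z : 'I_n -> X * Y) (Q : probability (borelRd R d) R)
  (f finv : R -> R) :
  (* standing assumptions *)
  (forall y1 y2, 0 <= loss y1 y2) ->
  (forall y, loss y y = 0) ->
  measurable (M : set (borelRd R d)) ->
  Q (~` M : set (borelRd R d)) = 0%E ->
  measurable_fun (M : set (borelRd R d)) (Lz h loss z) ->
  convex_on_nonneg f -> f 1 = 0 ->
  strictly_convex_on_nonneg f ->
  (forall x : R, 0 < x -> derivable f x 1) ->
  (* finv is the inverse of f' : (0,+oo) -> R, defined on all of R *)
  (forall x : R, 0 < x -> finv (derive1 f x) = x) ->
  (forall t : R, derive1 f (finv t) = t) ->
  (* hypothesis of the lemma: finv is strictly positive *)
  (forall t : R, 0 < finv t) ->
  admissible M h loss z Q finv = [set lam : R | 0 < lam].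
Proof.
move=> loss_ge0 _ mM QMc mL cvxf _ _ df derive1K finvK finv_gt0.
apply/seteqP; split=> lam /=; first by case.
move=> lam0; split=> //.
have QM : Q M = 1%E.
  by rewrite -[M]setCK probability_setC ?QMc ?sube0 //; exact: measurableC.
have Lz_ge0 th : M th -> 0 <= Lz h loss z th.
  by move=> _; rewrite mulr_ge0 ?invr_ge0 // sumr_ge0.
pose g t := finv (t / lam).
have finv_cont := finv_continuous cvxf df derive1K finvK finv_gt0.
have g_cont : continuous g.
  by move=> t; apply: continuous_comp; [exact: mulrr_continuous | exact: finv_cont].
have g_nd : {homo g : s t / s <= t}.
  by move=> s t st; rewrite /g (finv_le cvxf df finvK finv_gt0) ler_pM2r ?invr_gt0.
have gE x : 0 < x -> g (derive1 f x * lam) = x.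
  by move=> x0; rewrite /g mulfK ?gt_eqF ?derive1K.
have t0c : g (derive1 f 2^-1 * lam) <= 1 by rewrite gE //; lra.
have ct1 : 1 < g (derive1 f 2 * lam) by rewrite gE //; lra.
have [b Gb] := exists_shift_integral_eq mM QM mL Lz_ge0 g_cont g_nd
  (fun t => ltW (finv_gt0 _)) t0c ct1.
by exists b; split=> // th _ _; exact: finv_gt0.
Qed.
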